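(* Let $n\ge1$ and $k$ be integers. If the complete bipartite graph $K_{n,n}$ is $k$-removable, then $k> n-\sqrt{2n(\log n+1)}$.
   Context: $\log$ is the natural logarithm. For a graph $G$, $f:V(G)\to\mathbb Z$, $u\in V(G)$ and $W\subseteq N(u)$, $\mathsf{DelSave}(G,f,u,W)$ outputs $G'=G-u$ and $f'$ with $f'(x)=f(x)-1$ for $x\in N(u)\setminus W$ and $f'(x)=f(x)$ otherwise; it is legal if $f(u)>\sum_{w\in W}f(w)$ and $f'(x)\ge1$ for all $x\in V(G')$. $G$ is $f$-removable if all vertices can be deleted by successive legal $\mathsf{DelSave}$ applications, each time replacing $(G,f)$ by the output; $G$ is $k$-removable if it is $f$-removable for the constant function $f\equiv k$. *)

From mathcomp Require Import all_boot.
From Stdlib Require Import ZArith Reals.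
Set Implicit Arguments. Unset Strict Implicit. Unset Printing Implicit Defensive.

(* A simple graph: vertex type T (finite) and symmetric irreflexive adjacency e.
   The current graph during the deletion process is the induced subgraph on a
   vertex set S : {set T}.  Weights f : T -> Z (values outside S are irrelevant). *)

Definition zsum (T : finType) (W : {set T}) (f : T -> Z) : Z :=
  \big[Z.add/0%Z]_(w in W) f w.

Definition nbhd (T : finType) (e : rel T) (S : {set T}) (u : T) : {set T} :=
  [set x in S | e u x].

Definition delsave_f (T : finType) (e : rel T) (S : {set T}) (f : T -> Z)
  (u : T) (W : {set T}) : T -> Z :=
  fun x => if (x \in nbhd e S u) && (x \notin W) then (f x - 1)%Z else f x.

Definition delsave_legal (T : finType) (e : rel T) (S : {set T}) (f : T -> Z)
  (u : T) (W : {set T}) : Prop :=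
  u \in S /\ W \subset nbhd e S u /\
  (zsum W f < f u)%Z /\
  (forall x, x \in S :\ u -> (1 <= delsave_f e S f u W x)%Z).

Inductive removable (T : finType) (e : rel T) : {set T} -> (T -> Z) -> Prop :=
| removable_empty f : removable e set0 f
| removable_step S f u W :
    delsave_legal e S f u W ->
    removable e (S :\ u) (delsave_f e S f u W) ->
    removable e S f.

Definition k_removable (T : finType) (e : rel T) (k : Z) : Prop :=
  removable e [set: T] (fun _ => k).

Definition Knn_rel (n : nat) : rel ('I_n + 'I_n)%type :=
  fun x y => match x, y with
             | inl _, inr _ | inr _, inl _ => true
             | _, _ => false
             end.
Arguments Knn_rel n : clear implicits.

(* Follow a deletion sequence of K_{n,n} started from the constant weight k, and
   let a, b be the numbers of deleted vertices on the two sides.  A vertex loses at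
   most one unit of weight per deleted neighbour, so every surviving vertex keeps
   weight at least max(1, k - #deleted on the other side).  Consider the potential
     Phi(a, b) = (k-a)_+ (k-b)_+ + g(a) + g(b),
     g(a) = (k-1) (H_k - H_{(k-a)_+}) - (a-k)_+          (H = harmonic numbers).
   Deleting u with saved set W lowers  sum f - #edges  by exactly f(u) - |W|, while
   every saved neighbour has weight at least max(1, k-a), so |W| <= (f(u)-1)/max(1,k-a);
   this is precisely what the decrease of Phi absorbs.  Hence
   Phi(a, b) - Phi(n, n) <= sum f - #edges throughout, and at the start this reads
   k^2 - 2 g(n) <= 2nk - n^2, i.e. (n-k)^2 <= 2 (k-1) H_k - 2 (n-k) < 2n (ln n + 1). *)

From HB Require Import structures.
From mathcomp Require Import all_boot zify.
From Stdlib Require Import ZArith Reals Lra Lia.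
Import ssrnat.

HB.instance Definition _ :=
  Monoid.isComLaw.Build Z 0%Z Z.add Z.add_assoc Z.add_comm Z.add_0_l.

Section Weights.
Variables (T : finType) (e : rel T).
Implicit Types (S A D W : {set T}) (f : T -> Z).

Lemma zsumD1 S f u : u \in S -> zsum S f = (f u + zsum (S :\ u) f)%Z.
Proof.
move=> Su; rewrite /zsum (bigD1 u) //=; congr (_ + _)%Z.
by apply: eq_bigl => x; rewrite !inE andbC.
Qed.

Lemma zsum_const A c : zsum A (fun=> c) = (Z.of_nat #|A| * c)%Z.
Proof. by rewrite /zsum big_const; elim: #|A| => [|m IH] //; rewrite iterS IH; lia. Qed.

Lemma card_mul_le_zsum A f c :
  (forall x, x \in A -> c <= f x)%Z -> (Z.of_nat #|A| * c <= zsum A f)%Z.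
Proof.
move=> Ac; rewrite -zsum_const.
by apply: (big_ind2 (fun x y => x <= y)%Z) => //; lia.
Qed.

Lemma zsum_dec_on A D f : D \subset A ->
  zsum A (fun x => if x \in D then (f x - 1)%Z else f x) = (zsum A f - Z.of_nat #|D|)%Z.
Proof.
move=> DA; rewrite /zsum (big_setID D) [in RHS](big_setID D) /= (setIidPr DA).
rewrite [X in (_ + X)%Z](eq_bigr f); last by move=> x /setDP[_ /negbTE ->].
rewrite (eq_bigr (fun x => f x + -1)%Z); last by move=> x ->; lia.
by rewrite big_split /= -/(zsum D (fun=> (-1)%Z)) zsum_const; lia.
Qed.

Lemma nbhd_sub_setD1 S u : ~~ e u u -> nbhd e S u \subset S :\ u.
Proof.
move=> euu; apply/subsetP => x; rewrite !inE => /andP[Sx eux].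
by rewrite Sx andbT; apply: contraNneq euu => xu; rewrite xu in eux.
Qed.

Lemma zsum_delsave S f u W : ~~ e u u ->
  zsum (S :\ u) (delsave_f e S f u W) =
  (zsum (S :\ u) f - Z.of_nat #|nbhd e S u :\: W|)%Z.
Proof.
move=> euu; rewrite -zsum_dec_on; last first.
  exact: subset_trans (subsetDl _ _) (nbhd_sub_setD1 S u euu).
by rewrite /zsum; apply: eq_bigr => x _; rewrite /delsave_f in_setD andbC.
Qed.

Lemma zsum_delsave_D1 S f u W : ~~ e u u -> u \in S -> W \subset nbhd e S u ->
  zsum S f = (f u + zsum (S :\ u) (delsave_f e S f u W)
              + Z.of_nat #|nbhd e S u| - Z.of_nat #|W|)%Z.
Proof.
move=> euu Su WN; rewrite (zsumD1 S f u Su) zsum_delsave // cardsD (setIidPr WN).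
by have /leP := subset_leq_card WN; lia.
Qed.

Lemma delsave_f_le S f u W x : (delsave_f e S f u W x <= f x)%Z.
Proof. by rewrite /delsave_f; case: ifP => _; lia. Qed.

Lemma delsave_f_ge S f u W x : (f x - 1 <= delsave_f e S f u W x)%Z.
Proof. by rewrite /delsave_f; case: ifP => _; lia. Qed.

Lemma delsave_f_notin S f u W x :
  x \notin nbhd e S u -> delsave_f e S f u W x = f x.
Proof. by rewrite /delsave_f => /negbTE ->. Qed.

Lemma removable_weight_pos S f :
  removable e S f -> 1 < #|S| -> exists2 x, x \in S & (1 <= f x)%Z.
Proof.
case: S f / => [g | S g u W [Su [_ [_ pos]]] _ Sgt1]; first by rewrite cards0.
have [x Sx] : exists x, x \in S :\ u.
  by apply/set0Pn; rewrite -card_gt0; rewrite (cardsD1 u S) Su in Sgt1.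
exists x; first by move: Sx; rewrite in_setD1 => /andP[].
by have := pos x Sx; have := delsave_f_le S g u W x; lia.
Qed.

End Weights.

Section RealBounds.
Local Open Scope R_scope.

Fixpoint harmonic (m : nat) : R := if m is p.+1 then harmonic p + / INR p.+1 else 0.

Lemma harmonicS m : harmonic m.+1 = harmonic m + / INR m.+1.
Proof. by []. Qed.

Lemma ln_le_ln x y : 0 < x -> x <= y -> ln x <= ln y.
Proof.
move=> x0 /Rle_lt_or_eq_dec [xy|<-]; last exact: Rle_refl.
by apply: Rlt_le; apply: ln_increasing.
Qed.

Lemma ln_succ_sub_ge x : 0 < x -> / (x + 1) <= ln (x + 1) - ln x.
Proof.
move=> x0; have := exp_ineq1_le (ln x - ln (x + 1)).
rewrite exp_plus exp_Ropp !exp_ln; try lra.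
have -> : x * / (x + 1) = 1 - / (x + 1) by field; lra.
lra.
Qed.

Lemma harmonic_le_ln m : (0 < m)%N -> harmonic m <= 1 + ln (INR m).
Proof.
elim: m => [//|[|m] IH _]; first by rewrite /= ln_1; lra.
have := ln_succ_sub_ge _ (lt_0_INR m.+1 (Nat.lt_0_succ m)).
rewrite -S_INR harmonicS; have := IH isT; lra.
Qed.

Lemma sub_sqrt_lt x y c : 0 < c -> (y < x -> (x - y) ^ 2 < c) -> x - sqrt c < y.
Proof.
move=> c0 sq; have := sqrt_lt_R0 c c0; case: (Rlt_or_le y x) => [yx|]; last lra.
have := sqrt_lt_1_alt _ _ (conj (pow2_ge_0 (x - y)) (sq yx)).
rewrite sqrt_pow2; lra.
Qed.

End RealBounds.

Section Potential.
Variable k : nat.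
Local Open Scope R_scope.

(* On nat, [k - a] and [a - k] are the truncated differences (k-a)_+ and (a-k)_+. *)
Definition side_pot (a : nat) : R :=
  (INR k - 1) * (harmonic k - harmonic (k - a)) - INR (a - k).

Definition pot (a b : nat) : R := INR (k - a) * INR (k - b) + side_pot a + side_pot b.

Lemma pot_sym a b : pot a b = pot b a.
Proof. by rewrite /pot; ring. Qed.

Lemma pot00 : pot 0 0 = INR k * INR k.
Proof. by rewrite /pot /side_pot !subn0 sub0n /=; ring. Qed.

Lemma pot_diag_ge m : (k <= m)%N -> pot m m = 2 * ((INR k - 1) * harmonic k - (INR m - INR k)).
Proof.
move=> km; rewrite /pot /side_pot (eqP km) minus_INR; last exact/leP.
by rewrite /=; ring.
Qed.

Lemma side_pot_succ a :
  side_pot a.+1 = side_pot a + (if (a < k)%N then (INR k - 1) / INR (k - a) else -1).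
Proof.
rewrite /side_pot; case: ltnP => ak.
- have -> : (a.+1 - k = 0)%N by apply/eqP; rewrite subn_eq0.
  have -> : (a - k = 0)%N by apply/eqP; rewrite subn_eq0 ltnW.
  by rewrite -(subnSK ak) harmonicS /Rdiv; ring.
- have -> : (k - a.+1 = 0)%N by apply/eqP; rewrite subn_eq0 ltnW.
  have -> : (k - a = 0)%N by apply/eqP; rewrite subn_eq0.
  by rewrite subSn // S_INR; ring.
Qed.

Lemma pot_step q o w fu : 1 <= fu -> INR (k - o) <= fu ->
  INR w * INR (maxn 1 (k - q)) <= fu - 1 -> pot q o - pot q.+1 o <= fu - INR w.
Proof.
move=> fu1 fuo wq; rewrite /pot side_pot_succ; case: ltnP wq => qk wq.
- have cq : INR (k - q) = INR (k - q.+1) + 1 by rewrite -(subnSK qk) S_INR.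
  rewrite (maxn_idPr _) ?subn_gt0 // in wq.
  have c1 : 1 <= INR (k - q) by rewrite cq; have := pos_INR (k - q.+1); lra.
  have ok : INR (k - o) <= INR k by apply: le_INR; apply/leP; rewrite leq_subr.
  set c := INR (k - q) in cq c1 wq *; set r := INR (k - o) in fuo ok *.
  have ic : 0 <= / c by apply/Rlt_le/Rinv_0_lt_compat; lra.
  have cc : c * / c = 1 by field; lra.
  have wle : INR w <= (fu - 1) * / c.
    by have := Rmult_le_compat_r _ _ _ ic wq; rewrite Rmult_assoc cc Rmult_1_r.
  have key : (fu - INR k) * / c <= fu - r.
    (* (fu - r) * c - (fu - k) = (c - 1) * (fu - r) + (k - r) *)
    have h : fu - INR k <= (fu - r) * c by nra.
    by have := Rmult_le_compat_r _ _ _ ic h; rewrite Rmult_assoc cc Rmult_1_r.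
  have -> : INR (k - q.+1) = c - 1 by lra.
  rewrite /Rdiv; lra.
- have /eqP -> : (k - q.+1 == 0)%N by rewrite subn_eq0 ltnW.
  move: wq; rewrite (eqP qk) /=; lra.
Qed.

End Potential.

Lemma eqb_neg_id b : (b == ~~ b) = false.
Proof. by case: b. Qed.

Section CompleteBipartite.
Variables (T : finType) (e : rel T) (side : T -> bool) (n : nat).
Hypothesis eE : forall x y, e x y = (side x != side y).
Hypothesis side_card : forall s, #|[set x | side x == s]| = n.
Implicit Types (S W : {set T}) (f : T -> Z) (u v x : T) (s : bool).

Definition side_count S s : nat := #|[set x in S | side x == s]|.
Definition deleted S s : nat := n - side_count S s.
Definition nedges S : nat := side_count S true * side_count S false.

Lemma irr_bip u : ~~ e u u.
Proof. by rewrite eE eqxx. Qed.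

Lemma nbhd_bip S u : nbhd e S u = [set x in S | side x == ~~ side u].
Proof. by apply/setP => x; rewrite !inE eE; case: (side x); case: (side u). Qed.

Lemma side_count_le S s : side_count S s <= n.
Proof.
rewrite -(side_card s); apply: subset_leq_card.
by apply/subsetP => x; rewrite !inE => /andP[_ ->].
Qed.

Lemma side_count_gt0 S u : u \in S -> 0 < side_count S (side u).
Proof. by move=> Su; rewrite card_gt0; apply/set0Pn; exists u; rewrite !inE Su eqxx. Qed.

Lemma side_count_D1 S u s : u \in S ->
  side_count (S :\ u) s = side_count S s - (side u == s).
Proof.
move=> Su; rewrite /side_count.
have -> : [set x in S :\ u | side x == s] = [set x in S | side x == s] :\ u.
  by apply/setP => x; rewrite !inE andbA.
by rewrite (cardsD1 u [set x in S | side x == s]) !inE Su addKn.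
Qed.

Lemma side_count_setT s : side_count [set: T] s = n.
Proof. by rewrite /side_count -(side_card s); apply: eq_card => x; rewrite !inE. Qed.

Lemma deleted_setT s : deleted [set: T] s = 0.
Proof. by rewrite /deleted side_count_setT subnn. Qed.

Lemma side_count_set0 s : side_count set0 s = 0.
Proof. by apply/eqP; rewrite cards_eq0; apply/eqP/setP => x; rewrite !inE. Qed.

Lemma deleted_D1 S u s : u \in S -> deleted (S :\ u) s = deleted S s + (side u == s).
Proof.
move=> Su; rewrite /deleted side_count_D1 //.
have := side_count_le S s; have := side_count_gt0 S u Su.
by case: eqP => [<-|_]; lia.
Qed.

Lemma nedges_setT : nedges [set: T] = n * n.
Proof. by rewrite /nedges !side_count_setT. Qed.

Lemma nedges_D1 S u : u \in S -> nedges S = nedges (S :\ u) + #|nbhd e S u|.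
Proof.
move=> Su; rewrite nbhd_bip -/(side_count S (~~ side u)) /nedges !side_count_D1 //.
by have := side_count_gt0 S u Su; case: (side u) => /=; nia.
Qed.

Lemma zsum_sub_nedges_delsave S f u W : u \in S -> W \subset nbhd e S u ->
  (zsum S f - Z.of_nat (nedges S) =
   zsum (S :\ u) (delsave_f e S f u W) - Z.of_nat (nedges (S :\ u)) + f u - Z.of_nat #|W|)%Z.
Proof. by move=> Su WN; rewrite (zsum_delsave_D1 _ _ S f u W (irr_bip u) Su WN) (nedges_D1 S u Su); lia. Qed.

Variable k : nat.

Lemma pot_sides S s :
  pot k (deleted S true) (deleted S false) = pot k (deleted S s) (deleted S (~~ s)).
Proof. by case: s; last exact: pot_sym. Qed.

Definition weight_inv S f := forall v, v \in S ->
  (1 <= f v)%Z /\ (Z.of_nat (k - deleted S (~~ side v)) <= f v)%Z.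

Lemma weight_inv_delsave S f u W : weight_inv S f -> delsave_legal e S f u W ->
  weight_inv (S :\ u) (delsave_f e S f u W).
Proof.
move=> inv [Su [_ [_ pos]]] v Sv; have f'v1 := pos v Sv; split=> //.
move: Sv; rewrite in_setD1 => /andP[_ Sv]; have [_ fv] := inv v Sv.
rewrite deleted_D1 //; case: (eqVneq (side v) (side u)) => [svu|svu].
- rewrite delsave_f_notin; last by rewrite nbhd_bip inE svu; case: (side u); rewrite andbF.
  by rewrite -svu eqb_neg_id addn0.
- have -> : (side u == ~~ side v) by move: svu; case: (side u); case: (side v).
  by rewrite addn1; have := delsave_f_ge _ e S f u W v; lia.
Qed.

Lemma saved_weight_le S f u W : weight_inv S f -> delsave_legal e S f u W ->
  (Z.of_nat #|W| * Z.of_nat (maxn 1 (k - deleted S (side u))) <= f u - 1)%Z.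
Proof.
move=> inv [_ [WN [sumW _]]].
suff : (Z.of_nat #|W| * Z.of_nat (maxn 1 (k - deleted S (side u))) <= zsum W f)%Z by lia.
apply: card_mul_le_zsum => w Ww; have := subsetP WN w Ww.
rewrite nbhd_bip inE => /andP[Sw /eqP sw]; have := inv w Sw.
by rewrite sw negbK; lia.
Qed.

Lemma removable_pot_bound S f : removable e S f -> weight_inv S f ->
  (pot k (deleted S true) (deleted S false) - pot k n n
   <= IZR (zsum S f) - INR (nedges S))%R.
Proof.
elim=> {S f} [f _ | S f u W legal _ IH inv].
  by rewrite /deleted /nedges !side_count_set0 subn0 /zsum big_set0 /=; lra.
have [Su [WN _]] := legal; have [fu1 fuo] := inv u Su.
have := IH (weight_inv_delsave S f u W inv legal).
rewrite (pot_sides (S :\ u) (side u)) !deleted_D1 // eqxx eqb_neg_id addn0 addn1.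
rewrite (pot_sides S (side u)).
have := pot_step k (deleted S (side u)) (deleted S (~~ side u)) #|W| (IZR (f u))
  (IZR_le _ _ fu1).
have := f_equal IZR (zsum_sub_nedges_delsave S f u W Su WN).
rewrite !(minus_IZR, plus_IZR) -!INR_IZR_INZ.
have := IZR_le _ _ (saved_weight_le S f u W inv legal).
have := IZR_le _ _ fuo.
rewrite mult_IZR minus_IZR -!INR_IZR_INZ.
lra.
Qed.

End CompleteBipartite.

Definition Knn_side (n : nat) (x : 'I_n + 'I_n) : bool := if x is inl _ then true else false.

Lemma Knn_relE n x y : Knn_rel n x y = (Knn_side n x != Knn_side n y).
Proof. by case: x; case: y. Qed.

Lemma Knn_side_card n s : #|[set x | Knn_side n x == s]| = n.
Proof.
pose j i : 'I_n + 'I_n := if s then inl i else inr i.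
have -> : [set x | Knn_side n x == s] = j @: [set: 'I_n].
  apply/setP => x; apply/idP/imsetP => [|[i _ ->]]; last by rewrite !inE /j; case: (s).
  by rewrite !inE /j; case: x => i; case: (s) => // _; exists i.
by rewrite card_imset ?cardsT ?card_ord // /j; case: (s) => i i' [].
Qed.

Lemma Knn_removable_sq_lt n k : (0 < k)%N -> (k <= n)%N ->
  k_removable (Knn_rel n) (Z.of_nat k) ->
  ((INR n - INR k) ^ 2 < 2 * INR n * (ln (INR n) + 1))%R.
Proof.
move=> k0 kn rem; have card := Knn_side_card n.
have inv : weight_inv _ (Knn_side n) n k [set: _] (fun=> Z.of_nat k).
  by move=> v _; rewrite (deleted_setT _ _ _ card) subn0; lia.
have := removable_pot_bound _ _ _ n (Knn_relE n) card k _ _ rem inv.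
rewrite !(deleted_setT _ _ _ card) (nedges_setT _ _ _ card) pot00 pot_diag_ge //.
rewrite zsum_const cardsT card_sum card_ord mult_IZR -!INR_IZR_INZ plus_INR mult_INR.
have k1 : (1 <= INR k)%R by apply: (le_INR 1); apply/leP.
have knR : (INR k <= INR n)%R by apply: le_INR; apply/leP.
have ln0 : (0 <= ln (INR n))%R by rewrite -ln_1; apply: ln_le_ln; lra.
have Hk : (harmonic k <= 1 + ln (INR n))%R.
  by have := harmonic_le_ln k k0; have := ln_le_ln _ _ (Rlt_le_trans _ _ _ Rlt_0_1 k1) knR; lra.
have := Rmult_le_compat_l (INR k - 1) _ _ ltac:(lra) Hk.
nra.
Qed.

Theorem theorem4p6 (n : nat) (k : Z) :
  leq 1 n ->
  k_removable (Knn_rel n) k ->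
  (IZR k > INR n - sqrt (2 * INR n * (ln (INR n) + 1)))%R.
Proof.
move=> n1 rem.
have [_ _ k1] : exists2 v, v \in [set: 'I_n + 'I_n] & (1 <= k)%Z.
  by apply: removable_weight_pos rem _; rewrite cardsT card_sum card_ord; lia.
have n1R : (1 <= INR n)%R := le_INR 1 n (leP n1).
have ln0 : (0 <= ln (INR n))%R by rewrite -ln_1; apply: ln_le_ln; lra.
apply: sub_sqrt_lt; first nra.
have -> : k = Z.of_nat (Z.to_nat k) by rewrite Z2Nat.id //; lia.
rewrite -INR_IZR_INZ => kn.
apply: Knn_removable_sq_lt; first lia.
- by apply/leP/INR_le/Rlt_le.
- by rewrite Z2Nat.id //; lia.
Qed.
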